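(* Let $u\colon A\to\mathbb{R}$ be a locally Lipschitz function on an open set $A\subset\mathbb{R}^n$, and let $\psi\in C^2(I)$ satisfy $\psi'(t)>0$ for every $t\in I$, where $I\subset\mathbb{R}$ is an open interval containing $u(A)$. If the composite function $v=\psi\circ u$ is concave on every convex subset of $A$, then $u$ is locally semiconcave in $A$.
   Context: A function $u$ is locally semiconcave in $A$ if for every compact $K\subset A$ there is a constant $C=C(K)\ge 0$ such that $u(\lambda x+(1-\lambda)y)\ge \lambda u(x)+(1-\lambda)u(y)-C\frac{\lambda(1-\lambda)}{2}|x-y|^2$ for all segments $[x,y]\subset K$ and all $\lambda\in[0,1]$ (equivalently, $D^2u\le C\,I$ in the sense of distributions locally). *)

From HB Require Import structures.
From mathcomp Require Import all_boot all_order all_algebra.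
From mathcomp Require Import all_classical all_reals all_analysis.
Set Implicit Arguments. Unset Strict Implicit. Unset Printing Implicit Defensive.
Import Order.TTheory GRing.Theory Num.Theory.
Import numFieldNormedType.Exports.
Local Open Scope classical_set_scope.
Local Open Scope ring_scope.

Definition sqnorm {R : realType} {n : nat} (x : 'rV[R]_n) : R :=
  \sum_(i < n) (x ord0 i) ^+ 2.
Definition enorm {R : realType} {n : nat} (x : 'rV[R]_n) : R :=
  Num.sqrt (sqnorm x).

Definition convex_subset {R : realType} {n : nat} (C : set 'rV[R]_n) : Prop :=
  forall x y (l : R), C x -> C y -> 0 <= l <= 1 -> C (l *: x + (1 - l) *: y).

Definition concave_on {R : realType} {n : nat} (C : set 'rV[R]_n)
  (v : 'rV[R]_n -> R) : Prop :=
  forall x y (l : R), C x -> C y -> 0 <= l <= 1 ->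
    l * v x + (1 - l) * v y <= v (l *: x + (1 - l) *: y).

Definition locally_lipschitz {R : realType} {n : nat} (A : set 'rV[R]_n)
  (u : 'rV[R]_n -> R) : Prop :=
  forall x, A x -> exists r : R, 0 < r /\ exists L : R,
    forall y z, A y -> A z -> enorm (y - x) < r -> enorm (z - x) < r ->
      `|u y - u z| <= L * enorm (y - z).

Definition segment_in {R : realType} {n : nat} (x y : 'rV[R]_n)
  (K : set 'rV[R]_n) : Prop :=
  forall m : R, 0 <= m <= 1 -> K (m *: x + (1 - m) *: y).

Definition locally_semiconcave {R : realType} {n : nat} (A : set 'rV[R]_n)
  (u : 'rV[R]_n -> R) : Prop :=
  forall K : set 'rV[R]_n, compact K -> K `<=` A ->
    exists C : R, 0 <= C /\
      forall x y (l : R), segment_in x y K -> 0 <= l <= 1 ->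
        l * u x + (1 - l) * u y - C * (l * (1 - l)) / 2 * sqnorm (x - y)
          <= u (l *: x + (1 - l) *: y).

Definition C2_on {R : realType} (I : set R) (psi : R -> R) : Prop :=
  (forall t, I t -> derivable psi t 1) /\
  (forall t, I t -> derivable (derive1 psi) t 1) /\
  (forall t, I t -> {for t, continuous (derive1 (derive1 psi))}).

From mathcomp Require Import all_boot all_order all_algebra.
From mathcomp Require Import all_classical all_reals all_analysis.
From mathcomp Require Import finmap ring lra.
Set Implicit Arguments. Unset Strict Implicit. Unset Printing Implicit Defensive.
Import Order.TTheory GRing.Theory Num.Theory.
Import numFieldNormedType.Exports.
Local Open Scope classical_set_scope.
Local Open Scope ring_scope.

(* On a compact K the values of u lie in a segment J of I, on which |psi''| <= M
   and psi' >= k > 0.  Comparing psi with its tangent at the weighted mean m of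
   a = u x and b = u y, the concavity inequality
   l psi(a) + (1 - l) psi(b) <= psi(c), c = u (l x + (1 - l) y), yields
   psi(m) - psi(c) <= M l (1 - l) (a - b)^2, hence
   l a + (1 - l) b - c <= (M / k) l (1 - l) (a - b)^2.  Compactness makes the
   local Lipschitz bound uniform on K, so (a - b)^2 <= L^2 |x - y|^2. *)
Section euclidean_norm.
Variables (R : realType) (n : nat).
Implicit Types x y : 'rV[R]_n.

Lemma sqnorm_ge0 x : 0 <= sqnorm x.
Proof. by apply: sumr_ge0 => i _; exact: sqr_ge0. Qed.

Lemma enorm_ge0 x : 0 <= enorm x.
Proof. exact: sqrtr_ge0. Qed.

Lemma sqr_enorm x : enorm x ^+ 2 = sqnorm x.
Proof. by rewrite sqr_sqrtr // sqnorm_ge0. Qed.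

Lemma enormN x : enorm (- x) = enorm x.
Proof. by congr Num.sqrt; apply: eq_bigr => i _; rewrite mxE sqrrN. Qed.

Lemma enormB x y : enorm (x - y) = enorm (y - x).
Proof. by rewrite -enormN opprB. Qed.

Lemma mx_norm_le_enorm x : `|x| <= enorm x.
Proof.
rewrite [leLHS]/Num.norm /= mx_normrE; apply/bigmax_leP; split=> [|[i j] _ /=].
  exact: sqrtr_ge0.
rewrite (ord1 i) -sqrtr_sqr ler_wsqrtr // /sqnorm (bigD1 j) //= lerDl.
by apply: sumr_ge0 => k _; exact: sqr_ge0.
Qed.

Lemma enorm_le_mx_norm x : enorm x <= n.+1%:R * `|x|.
Proof.
have coord_le j : `|x ord0 j| <= `|x|.
  rewrite [leRHS]/Num.norm /= mx_normrE.
  by apply/bigmax_geP; right; exists (ord0, j).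
rewrite -(ger0_norm (mulr_ge0 (ler0n _ _) (normr_ge0 x))) -sqrtr_sqr.
apply: ler_wsqrtr; rewrite exprMn.
apply: (@le_trans _ _ (n%:R * `|x| ^+ 2)).
  have -> : n%:R * `|x| ^+ 2 = \sum_(j < n) `|x| ^+ 2.
    by rewrite sumr_const card_ord mulr_natl.
  apply: ler_sum => j _.
  by rewrite -real_normK ?num_real // lerXn2r ?nnegrE.
by rewrite ler_wpM2r ?exprn_ge0 // -natrX ler_nat (leq_trans (leqnSn n)) ?leq_pmulr.
Qed.

End euclidean_norm.

Section locally_lipschitz.
Variables (R : realType) (n : nat) (A : set 'rV[R]_n) (u : 'rV[R]_n -> R).
Hypothesis lipA : locally_lipschitz A u.

Lemma locally_lipschitz_continuous : open A ->
  forall x, A x -> {for x, continuous u}.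
Proof.
rewrite openE => Aop x Ax.
have [r [r0 [L HL]]] := lipA Ax.
apply/(@cvgrPdist_lt _ _ _ _ (nbhs_filter x)) => e e0.
pose d := Num.min r (e / (`|L| + 1)).
have d0 : 0 < d by rewrite lt_min r0 divr_gt0 // ltr_wpDl.
have near_x : \forall t \near x, `|x - t| < d / n.+1%:R.
  by apply: (@cvgrPdist_lt _ _ _ _ (nbhs_filter x) id x).1 cvg_id _ _; rewrite divr_gt0.
have near_A : \forall t \near x, A t by exact: Aop.
near=> t.
have At : A t by near: t.
have xt : `|x - t| < d / n.+1%:R by near: t.
have enorm_tx : enorm (t - x) < d.
  apply: le_lt_trans (enorm_le_mx_norm _) _.
  by rewrite distrC -ltr_pdivlMl // mulrC.
have e_tx : (`|L| + 1) * enorm (t - x) < e.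
  rewrite mulrC -ltr_pdivlMr ?ltr_wpDl //.
  by apply: lt_le_trans enorm_tx _; rewrite ge_min lexx orbT.
have Lip := HL x t Ax At.
rewrite subrr in Lip.
apply: le_lt_trans (Lip _ _) _.
- by apply: le_lt_trans (enorm_le_mx_norm _) _; rewrite normr0 mulr0.
- by apply: lt_le_trans enorm_tx _; rewrite ge_min lexx.
rewrite enormB; apply: le_lt_trans e_tx.
by rewrite ler_wpM2r ?enorm_ge0 // (le_trans (ler_norm L)) // lerDl.
Unshelve. all: by end_near.
Qed.

Lemma locally_lipschitz_within_continuous (K : set 'rV[R]_n) :
  open A -> K `<=` A -> {within K, continuous u}.
Proof.
move=> Aop KA; apply: continuous_in_subspaceT => x /set_mem Kx.
exact: locally_lipschitz_continuous Aop x (KA x Kx).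
Qed.

Lemma locally_lipschitz_uniform_scale (K : set 'rV[R]_n) :
  compact K -> K `<=` A ->
  exists2 delta, 0 < delta & exists L, forall y z, K y -> K z ->
    enorm (y - z) < delta -> `|u y - u z| <= L * enorm (y - z).
Proof.
move=> cK KA.
have /choice [f Hf] : forall x, exists p : R * R, A x -> 0 < p.1 /\
    forall y z, A y -> A z -> enorm (y - x) < p.1 -> enorm (z - x) < p.1 ->
      `|u y - u z| <= p.2 * enorm (y - z).
  move=> x; have [Ax|] := pselect (A x); last by exists (0, 0).
  by have [r [r0 [L HL]]] := lipA Ax; exists (r, L).
(* A max-norm ball of radius [2 * rho x] lies in the Euclidean ball of radius
   [(f x).1] on which [u] is [(f x).2]-Lipschitz. *)
pose rho x := (f x).1 / (2 * n.+1%:R).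
have rho_gt0 x : A x -> 0 < rho x.
  by move=> /Hf[r0 _]; rewrite divr_gt0 ?mulr_gt0.
have [D DK KD] : finite_subset_cover K (fun x => ball x (rho x)) K.
  rewrite compact_cover in cK; apply: cK => [x _|y Ky]; first exact: ball_open.
  by exists y => //; apply/ballxx/rho_gt0/KA.
exists (\big[Num.min/1]_(i <- D) rho i).
  rewrite big_seq; apply: (big_ind (fun v : R => 0 < v)) => //.
    by move=> a b a0 b0; rewrite lt_min a0 b0.
  by move=> i /DK /set_mem /KA /rho_gt0.
exists (\big[Num.max/0]_(i <- D) (f i).2) => y z Ky Kz yz.
have [i Di yi] := KD y Ky.
have [_ HL] := Hf i (KA i (set_mem (DK i Di))).
have rho_r : n.+1%:R * (2 * rho i) = (f i).1.
  by rewrite /rho; field; rewrite gt_eqF // ltr_pwDl.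
have near_i w : `|i - w| < 2 * rho i -> enorm (w - i) < (f i).1.
  move=> iw; apply: le_lt_trans (enorm_le_mx_norm _) _.
  by rewrite -rho_r distrC ltr_pM2l.
have delta_rho : \big[Num.min/1]_(i <- D) rho i <= rho i.
  exact: ge_bigmin_seq.
have rho_gt0i : 0 < rho i by apply/rho_gt0/KA/set_mem/DK.
rewrite -ball_normE /= in yi.
apply: le_trans (HL y z (KA y Ky) (KA z Kz) (near_i y _) (near_i z _)) _.
- by apply: lt_le_trans yi _; rewrite ler_pMl // ler1n.
- apply: le_lt_trans (ler_distD y _ _) _.
  rewrite mulr_natl mulr2n; apply: ltrD yi _.
  by apply: le_lt_trans (mx_norm_le_enorm _) (lt_le_trans yz delta_rho).
by rewrite ler_wpM2r ?enorm_ge0 //; apply: le_bigmax_seq Di _.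
Qed.

Lemma locally_lipschitz_compact (K : set 'rV[R]_n) :
  open A -> compact K -> K `<=` A ->
  exists L, forall y z, K y -> K z -> `|u y - u z| <= L * enorm (y - z).
Proof.
move=> Aop cK KA.
have [delta delta_gt0 [L HL]] := locally_lipschitz_uniform_scale cK KA.
have uK := locally_lipschitz_within_continuous Aop KA.
have [M [_ HM]] := compact_bounded (continuous_compact uK cK).
have uM y : K y -> `|u y| <= M + 1.
  by move=> Ky; apply: (HM (M + 1)); [rewrite ltrDl | exists y].
exists (Num.max L ((M + 1) *+ 2 / delta)) => y z Ky Kz.
have [near|far] := ltP (enorm (y - z)) delta.
  by apply: le_trans (HL y z Ky Kz near) _; rewrite ler_wpM2r ?enorm_ge0 ?le_max ?lexx.
have M1_ge0 : 0 <= M + 1 := le_trans (normr_ge0 _) (uM y Ky).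
apply: le_trans (ler_normB _ _) _.
apply: le_trans (lerD (uM y Ky) (uM z Kz)) _; rewrite -mulr2n.
apply: le_trans (_ : _ <= (M + 1) *+ 2 / delta * enorm (y - z)) _.
  by rewrite mulrAC ler_pdivlMr // ler_wpM2l ?mulrn_wge0.
by rewrite ler_wpM2r ?enorm_ge0 // le_max lexx orbT.
Qed.

End locally_lipschitz.

Section mean_value.
Variables (R : realType) (al be : R).

Lemma between_in_segment (s t xi : R) : al <= s <= be -> al <= t <= be ->
  Num.min s t <= xi <= Num.max s t -> al <= xi <= be.
Proof.
move=> /andP[als sbe] /andP[alt tbe] /andP[sxi xit].
by rewrite (le_trans _ sxi) ?(le_trans xit) // ?ge_max ?le_min ?sbe ?als.
Qed.

Lemma MVT_between (f : R -> R) :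
  (forall t, al <= t <= be -> derivable f t 1) ->
  forall s t, al <= s <= be -> al <= t <= be ->
  exists2 xi, Num.min s t <= xi <= Num.max s t & f t - f s = derive1 f xi * (t - s).
Proof.
move=> df s t Js Jt.
wlog st : s t Js Jt / s <= t.
  move=> H; have /orP[st|ts] := le_total s t; first exact: H.
  have [xi Hxi E] := H t s Jt Js ts.
  by exists xi; rewrite 1?minC 1?maxC // -opprB E -mulrN opprB.
have dst x : x \in `[s, t] -> derivable f x 1.
  rewrite in_itv /= => xst; apply: df.
  by apply: (between_in_segment Js Jt); rewrite min_l // max_r.
have [xi xi_st E] := MVT_segment st (fun x x_in => derivableP (dst x (subset_itv_oo_cc x_in)))
  (derivable_within_continuous dst).
exists xi; last by rewrite derive1E.
by rewrite min_l // max_r // -[_ && _]/(xi \in `[s, t]).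
Qed.

End mean_value.

Section concavity_defect.
Variables (R : realType) (psi : R -> R) (al be M k : R).
Hypotheses (psi_d1 : forall t, al <= t <= be -> derivable psi t 1)
  (psi_d2 : forall t, al <= t <= be -> derivable (derive1 psi) t 1)
  (psi''_le : forall t, al <= t <= be -> `|derive1 (derive1 psi) t| <= M).

Lemma taylor_lower_bound m t : al <= m <= be -> al <= t <= be ->
  psi m + derive1 psi m * (t - m) - M * (t - m) ^+ 2 <= psi t.
Proof.
move=> Jm Jt.
have [xi xi_mt E1] := MVT_between psi_d1 Jm Jt.
have Jxi := between_in_segment Jm Jt xi_mt.
have [eta eta_mxi E2] := MVT_between psi_d2 Jm Jxi.
have Jeta := between_in_segment Jm Jxi eta_mxi.
set D := derive1 (derive1 psi) eta in E2.
set p := (xi - m) * (t - m).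
have [p_ge0 p_le] : 0 <= p /\ p <= (t - m) ^+ 2.
  by move: xi_mt; rewrite /p; case: (leP m t) => _ /andP[? ?]; split; nra.
have E3 : (derive1 psi xi - derive1 psi m) * (t - m) = D * p by rewrite E2 mulrA.
have D_ge : - (`|D| * p) <= D * p.
  by rewrite -mulNr ler_wpM2r // lerNl -normrN ler_norm.
have Dp_le : `|D| * p <= M * (t - m) ^+ 2 by rewrite ler_pM ?psi''_le.
lra.
Qed.

Hypotheses (k_gt0 : 0 < k) (psi'_ge : forall t, al <= t <= be -> k <= derive1 psi t).

Lemma concavity_defect_bound a b c l :
  al <= a <= be -> al <= b <= be -> al <= c <= be -> 0 <= l <= 1 ->
  l * psi a + (1 - l) * psi b <= psi c ->
  l * a + (1 - l) * b - c <= M / k * (l * (1 - l) * (a - b) ^+ 2).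
Proof.
move=> Ja Jb Jc /andP[l_ge0 l_le1] concave_abc.
have l'_ge0 : 0 <= 1 - l by rewrite subr_ge0.
set m := l * a + (1 - l) * b.
have Jm : al <= m <= be.
  by move: Ja Jb => /andP[? ?] /andP[? ?]; apply/andP; split; rewrite /m; nra.
set E := l * (1 - l) * (a - b) ^+ 2.
have psi_m_le : psi m - M * E <= psi c.
  have ta := ler_wpM2l l_ge0 (taylor_lower_bound Jm Ja).
  have tb := ler_wpM2l l'_ge0 (taylor_lower_bound Jm Jb).
  have lin : l * (derive1 psi m * (a - m)) + (1 - l) * (derive1 psi m * (b - m)) = 0.
    by rewrite /m; ring.
  have quad : l * (M * (a - m) ^+ 2) + (1 - l) * (M * (b - m) ^+ 2) = M * E.
    by rewrite /E /m; ring.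
  lra.
have [mc|cm] := leP m c.
  have : 0 <= M / k * E.
    have M_ge0 : 0 <= M := le_trans (normr_ge0 _) (psi''_le Ja).
    have E_ge0 : 0 <= E by rewrite /E; apply: mulr_ge0; [exact: mulr_ge0 | exact: sqr_ge0].
    by rewrite mulr_ge0 // divr_ge0 // ltW.
  lra.
have [xi xi_cm E1] := MVT_between psi_d1 Jc Jm.
have : k * (m - c) <= psi m - psi c.
  by rewrite E1 ler_wpM2r ?psi'_ge ?(between_in_segment Jc Jm) // subr_ge0 ltW.
rewrite mulrAC ler_pdivlMr //; lra.
Qed.

End concavity_defect.

Lemma C2_concavity_defect (R : realType) (I : set R) (psi : R -> R) (al be : R) :
  C2_on I psi -> (forall t, I t -> 0 < derive1 psi t) ->
  al <= be -> (forall t, al <= t <= be -> I t) ->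
  exists2 Q, 0 <= Q & forall a b c l,
    al <= a <= be -> al <= b <= be -> al <= c <= be -> 0 <= l <= 1 ->
    l * psi a + (1 - l) * psi b <= psi c ->
    l * a + (1 - l) * b - c <= Q * (l * (1 - l) * (a - b) ^+ 2).
Proof.
move=> [psi_d1 [psi_d2 psi''_cont]] psi'_gt0 albe segI.
have J_I t : t \in `[al, be] -> I t by rewrite in_itv => /segI.
have [tM tM_in psi''_le] : exists2 tM, tM \in `[al, be] &
    forall t, t \in `[al, be] -> `|derive1 (derive1 psi) t| <= `|derive1 (derive1 psi) tM|.
  apply: EVT_max albe _; apply: continuous_in_subspaceT => t /set_mem /J_I It.
  exact: continuous_comp (psi''_cont t It) (@norm_continuous _ _ _).
have [tk tk_in psi'_ge] := EVT_min albe
  (derivable_within_continuous (fun t Jt => psi_d2 t (J_I t Jt))).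
have k_gt0 : 0 < derive1 psi tk by exact/psi'_gt0/J_I.
exists (`|derive1 (derive1 psi) tM| / derive1 psi tk); first by rewrite divr_ge0 // ltW.
have in_J t : al <= t <= be -> t \in `[al, be] by rewrite in_itv.
apply: concavity_defect_bound k_gt0 _ => t /in_J Jt.
- exact/psi_d1/J_I.
- exact/psi_d2/J_I.
- exact: psi''_le.
- exact: psi'_ge.
Qed.

Section segments.
Variables (R : realType) (n : nat).
Implicit Types (x y : 'rV[R]_n) (K : set 'rV[R]_n).

Lemma segment_in_endpoints x y K : segment_in x y K -> K x /\ K y.
Proof.
move=> seg; split.
  by have := seg 1; rewrite scale1r subrr scale0r addr0; apply; rewrite ler01 lexx.
by have := seg 0; rewrite scale0r add0r subr0 scale1r; apply; rewrite ler01 lexx.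
Qed.

Lemma segment_convex x y :
  convex_subset [set m *: x + (1 - m) *: y | m in [set m : R | 0 <= m <= 1]].
Proof.
move=> _ _ l [m1 /andP[m1_ge0 m1_le1] <-] [m2 /andP[m2_ge0 m2_le1] <-] /andP[l_ge0 l_le1].
exists (l * m1 + (1 - l) * m2); first by apply/andP; split; nra.
by apply/rowP => j; rewrite !mxE; ring.
Qed.

Lemma concave_on_segment (A : set 'rV[R]_n) (v : 'rV[R]_n -> R) x y (l : R) :
  (forall C, C `<=` A -> convex_subset C -> concave_on C v) ->
  segment_in x y A -> 0 <= l <= 1 ->
  l * v x + (1 - l) * v y <= v (l *: x + (1 - l) *: y).
Proof.
move=> concave seg l01.
apply: (concave _ _ (@segment_convex x y)); last exact: l01.
- by move=> _ [m m01 <-]; exact: seg.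
- by exists 1; rewrite /= ?ler01 ?lexx ?scale1r ?subrr ?scale0r ?addr0.
- by exists 0; rewrite /= ?ler01 ?lexx ?scale0r ?add0r ?subr0 ?scale1r.
Qed.

End segments.

Lemma EVT_rV (R : realType) (n : nat) (K : set 'rV[R]_n) (f : 'rV[R]_n -> R) :
  K !=set0 -> compact K -> {within K, continuous f} ->
  exists2 xmin, K xmin &
    exists2 xmax, K xmax & forall y, K y -> f xmin <= f y <= f xmax.
Proof.
move=> K0 cK fK.
have [xmin /set_mem Kxmin f_ge] := EVT_min_rV K0 cK fK.
have [xmax /set_mem Kxmax f_le] := EVT_max_rV K0 cK fK.
by exists xmin => //; exists xmax => // y /mem_set Ky; rewrite f_ge ?f_le.
Qed.

Theorem proposition2p1 (R : realType) (n : nat) (A : set 'rV[R]_n)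
  (u : 'rV[R]_n -> R) (I : set R) (psi : R -> R) :
  open A ->
  locally_lipschitz A u ->
  is_interval I -> open I -> u @` A `<=` I ->
  C2_on I psi ->
  (forall t, I t -> 0 < derive1 psi t) ->
  (forall C : set 'rV[R]_n, C `<=` A -> convex_subset C ->
     concave_on C (psi \o u)) ->
  locally_semiconcave A u.
Proof.
move=> Aop lip Iint _ uAI psiC2 psi'_gt0 concave K cK KA.
have [K0|K0] := pselect (K !=set0); last first.
  exists 0; split=> // x y l seg.
  by have [Kx _] := segment_in_endpoints seg; case: K0; exists x.
have [xmin Kxmin [xmax Kxmax uK_in]] :=
  EVT_rV K0 cK (locally_lipschitz_within_continuous lip Aop KA).
have segI : forall t, u xmin <= t <= u xmax -> I t.
  by apply: Iint; apply: uAI; [exists xmin | exists xmax]; rewrite //; apply: KA.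
have min_le_max : u xmin <= u xmax by have /andP[] := uK_in _ Kxmin.
have [Q Q_ge0 defect] := C2_concavity_defect psiC2 psi'_gt0 min_le_max segI.
have [L uL] := locally_lipschitz_compact lip Aop cK KA.
exists (Q * L ^+ 2 *+ 2); split; first by rewrite mulrn_wge0 // mulr_ge0 // sqr_ge0.
move=> x y l seg l01.
have [Kx Ky] := segment_in_endpoints seg.
have := defect _ _ _ l (uK_in x Kx) (uK_in y Ky) (uK_in _ (seg l l01)) l01
  (concave_on_segment concave (fun m m01 => KA _ (seg m m01)) l01).
have lip2 : (u x - u y) ^+ 2 <= L ^+ 2 * sqnorm (x - y).
  have uLxy := uL x y Kx Ky.
  rewrite -sqr_enorm -exprMn -real_normK ?num_real // ler_pXn2r ?nnegrE //.
  exact: le_trans uLxy.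
have l'l_ge0 : 0 <= l * (1 - l) by case/andP: l01 => ? ?; nra.
have := ler_wpM2l Q_ge0 (ler_wpM2l l'l_ge0 lip2).
lra.
Qed.
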